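(* Let $\mathcal M$ be a non-empty compact, locally connected Hausdorff space, $\vec\varphi:\mathcal M\to\mathbb R^k$ continuous, and $\vec x,\vec y\in\mathbb R^k$ with $x_i\le y_i$ for all $i$. Then $\lim_{\varepsilon\to0^+}\ell_{(\mathcal M,\vec\varphi)}(\vec x,(y_1+\varepsilon,\dots,y_k+\varepsilon))$ equals the number $L(\vec x,\vec y)\in\mathbb N\cup\{+\infty\}$ of equivalence classes of $\mathcal M\langle\vec\varphi\preceq\vec x\rangle$ with respect to the $\langle\vec\varphi\preceq\vec y\rangle$-connectedness relation.
   Context: For $\vec t\in\mathbb R^k$, $\mathcal M\langle\vec\varphi\preceq\vec t\rangle=\{P\in\mathcal M:\varphi_i(P)\le t_i\ \forall i\}$. $P,Q$ are $\langle\vec\varphi\preceq\vec t\rangle$-connected if a connected subset of $\mathcal M\langle\vec\varphi\preceq\vec t\rangle$ contains both. For $\vec x,\vec y$ with $x_i<y_i$ for all $i$, the size function $\ell_{(\mathcal M,\vec\varphi)}(\vec x,\vec y)$ is the number of equivalence classes of $\mathcal M\langle\vec\varphi\preceq\vec x\rangle$ under $\langle\vec\varphi\preceq\vec y\rangle$-connectedness. *)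

From HB Require Import structures.
From mathcomp Require Import all_boot all_order all_algebra.
From mathcomp Require Import finmap.
From mathcomp Require Import all_classical all_reals all_analysis.
Set Implicit Arguments. Unset Strict Implicit. Unset Printing Implicit Defensive.
Import Order.TTheory GRing.Theory Num.Theory.
Import numFieldNormedType.Exports.
Local Open Scope classical_set_scope.
Local Open Scope ring_scope.

(* R^k is modelled by row vectors 'rV[R]_k (product topology). *)

Definition locally_connected (M : topologicalType) : Prop :=
  forall (p : M) (U : set M), nbhs p U ->
    exists V : set M, [/\ open V, connected V, V p & V `<=` U].

Definition sublevel (R : realType) (M : topologicalType) (k : nat)
  (phi : M -> 'rV[R]_k) (t : 'rV[R]_k) : set M :=
  [set P | forall i : 'I_k, phi P ord0 i <= t ord0 i].

Definition sub_connected (R : realType) (M : topologicalType) (k : nat)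
  (phi : M -> 'rV[R]_k) (t : 'rV[R]_k) (P Q : M) : Prop :=
  exists C : set M, [/\ C `<=` sublevel phi t, connected C, C P & C Q].

Definition classes (R : realType) (M : topologicalType) (k : nat)
  (phi : M -> 'rV[R]_k) (x y : 'rV[R]_k) : set (set M) :=
  [set [set Q | sublevel phi x Q /\ sub_connected phi y P Q]
     | P in sublevel phi x].

Definition card_ext (R : realType) (T : choiceType) (A : set T) : \bar R :=
  (if pselect (finite_set A) then ((#|` fset_set A|)%fset%:R : R)%:E else +oo)%E.

(* number of equivalence classes; for x < y this is the size function l(x,y),
   in general it is L(x,y). *)
Definition nclasses (R : realType) (M : topologicalType) (k : nat)
  (phi : M -> 'rV[R]_k) (x y : 'rV[R]_k) : \bar R :=
  card_ext R (classes phi x y).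

Definition size_function (R : realType) (M : topologicalType) (k : nat)
  (phi : M -> 'rV[R]_k) (x y : 'rV[R]_k) : \bar R := nclasses phi x y.

From HB Require Import structures.
From mathcomp Require Import all_boot all_order all_algebra.
From mathcomp Require Import finmap.
From mathcomp Require Import all_classical all_reals all_analysis.
Import Order.TTheory GRing.Theory Num.Theory.
Import numFieldNormedType.Exports.
Local Open Scope classical_set_scope.
Local Open Scope ring_scope.
Set Implicit Arguments. Unset Strict Implicit. Unset Printing Implicit Defensive.

(* For x <= t <= t', every <phi <= t'>-class of M<phi <= x> is a union of
   <phi <= t>-classes, so l(x, y + e) <= L(x, y) for e >= 0.  Conversely, if P
   and Q are <phi <= y + e>-connected for every e > 0, the components through P
   of the closed sets M<phi <= y + e> form a decreasing family of continua
   containing Q; in a compact Hausdorff space their intersection is again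
   connected, and it lies in M<phi <= y>.  Hence finitely many distinct
   <phi <= y>-classes stay distinct at level y + e for all small e > 0, which
   gives the matching lower bound. *)

Lemma connected_sub_open (T : topologicalType) (A U V : set T) :
  connected A -> open U -> open V -> U `&` V = set0 -> A `<=` U `|` V ->
  A `&` U !=set0 -> A `<=` U.
Proof.
move=> cA oU oV UV0 AUV AU0.
have AUE : A `&` U = A `&` ~` V.
  apply/seteqP; split=> t [At Ht]; split=> //.
    by move=> Vt; have : (U `&` V) t by []; rewrite UV0.
  by case: (AUV t At).
have <- : A `&` U = A.
  by apply: cA => //; [exists U | exists (~` V); [exact: open_closedC|]].
by move=> t [].
Qed.

Section nested_continua.
Variables (R : realType) (T : topologicalType) (C : R -> set T).
Hypothesis closedC : forall e, 0 < e -> closed (C e).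
Hypothesis homoC : forall e e', 0 < e -> e <= e' -> C e `<=` C e'.

Let I := \bigcap_(e in [set e : R | 0 < e]) C e.

Lemma nested_closed_sub_open (W : set T) : compact [set: T] -> open W ->
  I `<=` W -> exists2 e, 0 < e & C e `<=` W.
Proof.
move=> cT oW IW; apply: contrapT => noe.
pose F := filter_from [set e : R | 0 < e] (fun e => C e `\` W).
have FF : ProperFilter F.
  apply: filter_from_proper; last first.
    move=> e e0; apply/set0P/negP => /eqP; rewrite setD_eq0 => CW.
    by apply: noe; exists e.
  apply: filter_from_filter; first by exists 1 => /=.
  move=> e e' e0 e'0; exists (Order.min e e'); first by rewrite /= lt_min e0.
  by move=> t [Ct nWt]; split; split=> //; apply: homoC Ct;
    rewrite ?lt_min ?e0 ?e'0 // ge_min lexx ?orbT.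
have [p [_ clp]] := cT F FF filterT; rewrite clusterE in clp.
have Cp e : 0 < e -> (C e `\` W) p.
  move=> e0; have /closure_id -> : closed (C e `\` W).
    by apply: closedI; [exact: closedC|exact: open_closedC].
  by apply: clp; exists e.
have Ip : I p by move=> e /Cp[].
by have [_] := Cp 1 ltr01; apply; exact: IW Ip.
Qed.

Lemma connected_bigcap_nested : hausdorff_space T -> compact [set: T] ->
  (forall e, 0 < e -> connected (C e)) -> connected I.
Proof.
move=> hT cT connC B [b Bb] [G oG BIG] [K cK BIK].
have BI : B `<=` I by rewrite BIG => t [].
apply/seteqP; split=> // z Iz; apply: contrapT => nBz.
have Iclosed : closed I by apply: closed_bigI.
(* Separate B from I minus G, then push the separation down to some C e. *)
have [U [V [oU oV BU IOV UV0]]] :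
    exists U V, [/\ open U, open V, B `<=` U, I `\` G `<=` V & U `&` V = set0].
  apply: (normal_openP (R := R)).1; first exact: compact_normal.
  - by rewrite BIK; apply: closedI.
  - by apply: closedI => //; exact: open_closedC.
  by rewrite BIG -subset0 => t [[_ Gt] [_ nGt]].
have IUV : I `<=` U `|` V.
  move=> t It; have [Gt|nGt] := pselect (G t); last by right; apply: IOV.
  by left; apply: BU; rewrite BIG.
have [e e0 CUV] := nested_closed_sub_open cT (openU oU oV) IUV.
have CU : C e `<=` U.
  apply: connected_sub_open (connC e e0) oU oV UV0 CUV _.
  by exists b; split; [exact: BI Bb e e0|exact: BU].
have : (U `&` V) z.
  by split; [exact: CU (Iz e e0)|apply: IOV; split=> // Gz; apply: nBz; rewrite BIG].
by rewrite UV0.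
Qed.

End nested_continua.

Section cardinality.
Variable R : realType.
Local Open Scope ereal_scope.

Lemma card_ext_fin (T : choiceType) (A : set T) :
  finite_set A -> card_ext R A = (#|` fset_set A|%:R)%:E.
Proof. by rewrite /card_ext; case: pselect. Qed.

Lemma card_ext_inf (T : choiceType) (A : set T) :
  infinite_set A -> card_ext R A = +oo.
Proof. by rewrite /card_ext; case: pselect. Qed.

Lemma card_ext_ge (T : choiceType) (A : set T) (S : {fset T}) :
  [set` S] `<=` A -> (#|` S|%:R : R)%:E <= card_ext R A.
Proof.
move=> SA; have [finA|/card_ext_inf ->] := pselect (finite_set A); last exact: leey.
rewrite card_ext_fin // lee_fin ler_nat; apply/fsubset_leq_card/fsubsetP => t tS.
by rewrite in_fset_set // inE; apply: SA.
Qed.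

Lemma card_ext_le_image (T U : choiceType) (A : set T) (B : set U) (f : U -> T) :
  A `<=` f @` B -> card_ext R A <= card_ext R B.
Proof.
move=> AfB; have [finB|/card_ext_inf ->] := pselect (finite_set B); last exact: leey.
have finfB : finite_set (f @` B) by apply: finite_image.
have finA : finite_set A by apply: sub_finite_set AfB finfB.
rewrite !card_ext_fin // lee_fin ler_nat.
rewrite (@leq_trans #|` fset_set (f @` B)|) //.
  by apply: fsubset_leq_card; rewrite -fset_set_sub.
by rewrite fset_set_image //; apply: leq_imfset_card.
Qed.

Lemma cvg_card_ext (T : choiceType) (U : Type) (F : set_system U) (FF : Filter F)
    (A : set T) (f : U -> \bar R) :
  (\forall u \near F, f u <= card_ext R A) ->
  (forall S : {fset T}, [set` S] `<=` A -> \forall u \near F, (#|` S|%:R)%:E <= f u) ->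
  f @ F --> card_ext R A.
Proof.
move=> fA Af; have [finA|infA] := pselect (finite_set A).
  apply: cvg_near_cst; have SA : [set` fset_set A] `<=` A.
    by move=> t /=; rewrite in_fset_set // inE.
  apply: filterS2 fA (Af _ SA) => u fuA Afu; apply: le_anti.
  by rewrite fuA (card_ext_fin finA).
rewrite card_ext_inf //; apply/cvgeyPge => r.
have [S SA Sr] := infinite_set_fset (Num.truncn r).+1 infA.
apply: filterS (Af S SA) => u; apply: le_trans; rewrite lee_fin.
by apply: le_trans (ltW (truncnS_gt r)) _; rewrite ler_nat.
Qed.

End cardinality.

Lemma filter_fset2 (T : Type) (I : choiceType) (F : set_system T) (S : {fset I})
    (P : I -> I -> set T) : Filter F ->
  (forall i j, i \in S -> j \in S -> \forall t \near F, P i j t) ->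
  \forall t \near F, forall i j, i \in S -> j \in S -> P i j t.
Proof.
move=> FF SP.
have Si i : i \in S -> F (\bigcap_(j in [set` S]) P i j).
  by move=> iS; apply: filter_bigI => j jS; exact: SP.
by apply: filterS (filter_bigI FF Si) => t SPt i j iS jS; exact: SPt i iS j jS.
Qed.

Section shifts.
Variables (R : realType) (k : nat) (y : 'rV[R]_k).

Lemma shift_homo (e e' : R) : e <= e' ->
  forall i, (y + const_mx e) ord0 i <= (y + const_mx e') ord0 i.
Proof. by move=> ee' i; rewrite !mxE lerD2l. Qed.

Lemma shift_ge (e : R) : 0 <= e -> forall i, y ord0 i <= (y + const_mx e) ord0 i.
Proof. by move=> e0 i; rewrite !mxE lerDl. Qed.

End shifts.

Section sublevel_connectedness.
Variables (R : realType) (M : topologicalType) (k : nat) (phi : M -> 'rV[R]_k).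
Implicit Types (t : 'rV[R]_k) (P Q : M).

Lemma sublevelS t t' :
  (forall i, t ord0 i <= t' ord0 i) -> sublevel phi t `<=` sublevel phi t'.
Proof. by move=> tt' P Pt i; apply: le_trans (Pt i) (tt' i). Qed.

Lemma sub_connectedS t t' P Q : (forall i, t ord0 i <= t' ord0 i) ->
  sub_connected phi t P Q -> sub_connected phi t' P Q.
Proof.
move=> tt' [C [Ct cC CP CQ]]; exists C; split=> //.
exact: subset_trans Ct (sublevelS tt').
Qed.

Lemma sub_connected_refl t P : sublevel phi t P -> sub_connected phi t P P.
Proof. by move=> Pt; exists [set P]; split=> //; [move=> w -> | exact: connected1]. Qed.

Lemma sub_connected_sym t P Q : sub_connected phi t P Q -> sub_connected phi t Q P.
Proof. by move=> [C [? ? ? ?]]; exists C. Qed.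

Lemma sub_connected_trans t P Q S : sub_connected phi t P Q ->
  sub_connected phi t Q S -> sub_connected phi t P S.
Proof.
move=> [C [Ct cC CP CQ]] [D [Dt cD DQ DS]]; exists (C `|` D); split.
- by move=> w [/Ct|/Dt].
- by apply: connectedU => //; exists Q.
- by left.
- by right.
Qed.

Hypothesis phi_cont : continuous phi.

Lemma closed_sublevel t : closed (sublevel phi t).
Proof.
have -> : sublevel phi t = \bigcap_(i in [set: 'I_k])
    (phi @^-1` ((fun m : 'rV[R]_k => m ord0 i) @^-1` [set r | r <= t ord0 i])).
  by apply/seteqP; split=> P Pt i => [_|]; [exact: Pt | exact: Pt i I].
apply: closed_bigI => i _; apply: preimage_closed => [P _|]; first exact: phi_cont.
by apply: preimage_closed => [m _|]; [exact: coord_continuous | exact: closed_le].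
Qed.

Hypotheses (M_hausdorff : hausdorff_space M) (M_compact : compact [set: M]).

Lemma sub_connected_limit y P Q : sublevel phi y P ->
  (forall e, 0 < e -> sub_connected phi (y + const_mx e) P Q) ->
  sub_connected phi y P Q.
Proof.
move=> Py PQ; pose C e := connected_component (sublevel phi (y + const_mx e)) P.
have Pe e : 0 < e -> sublevel phi (y + const_mx e) P.
  by move=> e0; apply: sublevelS Py; apply/shift_ge/ltW.
exists (\bigcap_(e in [set e : R | 0 < e]) C e); split.
- move=> w Cw i; apply/ler_addgt0Pr => e e0.
  by have := connected_component_sub (Cw e e0) i; rewrite !mxE.
- apply: connected_bigcap_nested => // [e e0|e e' e0 ee'|e e0].
  + exact/component_closed/closed_sublevel.
  + apply: connected_component_max; last exact: component_connected.
      exact/connected_component_refl/Pe.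
    by move=> w /connected_component_sub; apply/sublevelS/shift_homo.
  + exact: component_connected.
- by move=> e e0; apply/connected_component_refl/Pe.
- move=> e e0; have [D [Dt cD DP DQ]] := PQ e e0.
  exact: (connected_component_max DP Dt cD) Q DQ.
Qed.

Lemma near_not_sub_connected y P Q : sublevel phi y P ->
  ~ sub_connected phi y P Q ->
  \forall e \near 0^'+, ~ sub_connected phi (y + const_mx e) P Q.
Proof.
move=> Py nPQ; have [e0 e0_gt0 nPQe0] :
    exists2 e0, 0 < e0 & ~ sub_connected phi (y + const_mx e0) P Q.
  apply: contrapT => allPQ; apply/nPQ/sub_connected_limit => // e e0.
  by apply: contrapT => nPQe; apply: allPQ; exists e.
near=> e => PQe; apply/nPQe0/(sub_connectedS _ PQe)/shift_homo.
by near: e; exact: nbhs_right_ltW.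
Unshelve. all: by end_near.
Qed.

End sublevel_connectedness.

Section counting_classes.
Variables (R : realType) (M : topologicalType) (k : nat) (phi : M -> 'rV[R]_k).
Variable x : 'rV[R]_k.
Implicit Types (t y : 'rV[R]_k) (P Q : M).

Definition connected_class t P : set M :=
  [set Q | sublevel phi x Q /\ sub_connected phi t P Q].

(* Maps the <phi <= s>-class of P to its <phi <= t>-class when s <= t,
   without choosing a representative. *)
Definition saturation t (c : set M) : set M :=
  [set Q | sublevel phi x Q /\ exists2 P, c P & sub_connected phi t P Q].

Lemma connected_class_eq t P Q :
  sub_connected phi t P Q -> connected_class t P = connected_class t Q.
Proof.
move=> PQ; apply/seteqP; split=> S [Sx HS]; split=> //.
  exact: sub_connected_trans (sub_connected_sym PQ) HS.
exact: sub_connected_trans PQ HS.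
Qed.

Lemma connected_class_eqP t P Q : (forall i, x ord0 i <= t ord0 i) ->
  sublevel phi x Q ->
  connected_class t P = connected_class t Q <-> sub_connected phi t P Q.
Proof.
move=> xt Qx; split; last exact: connected_class_eq.
have : connected_class t Q Q by split=> //; apply/sub_connected_refl/(sublevelS xt).
by move=> + PQ; rewrite -PQ => -[].
Qed.

Lemma saturation_connected_class t t' P :
  (forall i, x ord0 i <= t ord0 i) -> (forall i, t ord0 i <= t' ord0 i) ->
  sublevel phi x P -> saturation t' (connected_class t P) = connected_class t' P.
Proof.
move=> xt tt' Px; apply/seteqP; split=> Q [Qx HQ]; split=> //.
  have [S [_ PS] SQ] := HQ.
  exact: sub_connected_trans (sub_connectedS tt' PS) SQ.
exists P => //; split=> //.
exact/sub_connected_refl/(sublevelS xt).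
Qed.

Lemma nclasses_le t t' :
  (forall i, x ord0 i <= t ord0 i) -> (forall i, t ord0 i <= t' ord0 i) ->
  (nclasses phi x t' <= nclasses phi x t)%E.
Proof.
move=> xt tt'; apply: (@card_ext_le_image _ _ _ _ _ (saturation t')) => _ [P Px <-].
by exists (connected_class t P); [exists P | exact: saturation_connected_class].
Qed.

Hypotheses (phi_cont : continuous phi) (M_hausdorff : hausdorff_space M)
  (M_compact : compact [set: M]).

Lemma nclasses_near_ge y (S : {fset set M}) : (forall i, x ord0 i <= y ord0 i) ->
  [set` S] `<=` classes phi x y ->
  \forall e \near 0^'+, ((#|` S|%:R : R)%:E <= nclasses phi x (y + const_mx e))%E.
Proof.
move=> xy Sxy.
have x_le_shift e : 0 <= e -> forall i, x ord0 i <= (y + const_mx e) ord0 i.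
  by move=> e0 i; apply: le_trans (xy i) (shift_ge _ e0 i).
have sat_inj : \forall e \near 0^'+, {in S &, injective (saturation (y + const_mx e))}.
  apply: filter_fset2 => _ _ /Sxy[P Px <-] /Sxy[Q Qx <-].
  have [PQ|nPQ] := pselect (sub_connected phi y P Q).
    by near=> e => _; apply: connected_class_eq.
  have Py : sublevel phi y P by apply: sublevelS Px.
  apply: filterS2 (nbhs_right_ge 0)
    (near_not_sub_connected phi_cont M_hausdorff M_compact Py nPQ) => e e0 nPQe.
  rewrite !(saturation_connected_class xy (shift_ge _ e0)) //.
  by move=> /(connected_class_eqP P (x_le_shift e e0) Qx).
near=> e.
apply: le_trans (@card_ext_ge _ _ _ (saturation (y + const_mx e) @` S)%fset _).
  by rewrite card_in_imfset //; near: e.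
move=> _ /imfsetP[c cS ->]; have [P Px <-] := Sxy c cS; exists P => //.
rewrite saturation_connected_class //; apply: shift_ge.
by near: e; apply: nbhs_right_ge.
Unshelve. all: by end_near.
Qed.

End counting_classes.

Unset Implicit Arguments.

Theorem lemma5p2 (R : realType) (M : topologicalType) (k : nat)
  (phi : M -> 'rV[R]_k) (x y : 'rV[R]_k) :
  [set: M] !=set0 -> compact [set: M] -> locally_connected M ->
  hausdorff_space M -> continuous phi ->
  (forall i : 'I_k, x ord0 i <= y ord0 i) ->
  (fun e : R => size_function phi x (y + const_mx e)) @ 0^'+
    --> nclasses phi x y.
Proof.
move=> _ M_compact _ M_hausdorff phi_cont xy; apply: cvg_card_ext.
  near=> e; apply: nclasses_le xy _; apply: shift_ge.
  by near: e; apply: nbhs_right_ge.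
by move=> S; exact: nclasses_near_ge.
Unshelve. all: by end_near.
Qed.
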